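(* Let $s,s'\in\mathbb C$, $f\in C_c^{\mathrm{lc}}(G/M)$ and $\gamma\in G$, and set $f_\gamma(gM)=f(\gamma^{-1}gM)$. Then for all $g\in G$, with $(\omega_1,\omega_2)=(g\omega_+,g\omega_-)$, $$(\mathcal R_{s,s'}f_\gamma)(\omega_1,\omega_2)=q^{(\frac12+is)\langle\gamma o,\omega_1\rangle}q^{(\frac12-i\overline{s'})\langle\gamma o,\omega_2\rangle}(\mathcal R_{s,s'}f)(\gamma^{-1}\omega_1,\gamma^{-1}\omega_2),$$ i.e. $(\mathcal R_{s,s'}f_\gamma)(gM\langle\tau\rangle)=q^{(\frac12+is)\langle\gamma o,g\omega_+\rangle}q^{(\frac12-i\overline{s'})\langle\gamma o,g\omega_-\rangle}(\mathcal R_{s,s'}f)(\gamma^{-1}gM\langle\tau\rangle)$.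
   Context: Let $q\ge2$, $\mathfrak G$ the $(q+1)$-regular tree with vertex set $\mathfrak X$, graph distance $d$, boundary $\Omega$ (infinite non-backtracking edge chains modulo eventual equality up to shift). Fix a vertex $o$ and $\omega_-\ne\omega_+$ with $o$ on the geodesic $]\omega_-,\omega_+[$; $\langle x,\omega\rangle=d(o,y)-d(x,y)$ where $[o,\omega)\cap[x,\omega)=[y,\omega)$. $G=\mathrm{Aut}(\mathfrak G)$, $K=\mathrm{Stab}_G(o)$, $B_{\omega_+}=\{g:g\omega_+=\omega_+,\ g\text{ fixes a vertex}\}$, $\tau\in G$ fixes $\omega_\pm$ and translates $]\omega_-,\omega_+[$ one step towards $\omega_+$; $g=kn\tau^j$ ($k\in K,n\in B_{\omega_+}$) with unique $j=:H(g)$. $r\in K$ with $r^2=\mathrm{id}$, $r\tau^jr^{-1}=\tau^{-j}$. $M=\{\gamma\in K:\gamma$ fixes $]\omega_-,\omega_+[$ pointwise$\}$. $G/M\cong\{(\omega,\omega',x):\omega\ne\omega',x\in]\omega,\omega'[\}$ via $gM\mapsto(g\omega_-,g\omega_+,go)$; $C_c^{\mathrm{lc}}(G/M)$ = locally constant compactly supported functions. With $d_{s,s'}(gM)=q^{(\frac12+is)H(g)}q^{(\frac12+is')H(gr)}$, the weighted Radon transform is $(\mathcal R_{s,s'}f)(gM\langle\tau\rangle)=\sum_{j\in\mathbb Z}f(g\tau^jM)d_{s,-\overline{s'}}(g\tau^jM)$; it is regarded as a function on pairs of distinct boundary points via $gM\langle\tau\rangle\leftrightarrow(g\omega_+,g\omega_-)$.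 *)

From Stdlib Require Import ClassicalEpsilon.
From mathcomp Require Import all_boot all_order all_algebra.
From mathcomp Require Import all_classical all_reals all_analysis.
From mathcomp Require Export complex.
Set Implicit Arguments. Unset Strict Implicit. Unset Printing Implicit Defensive.
Import GRing.Theory Num.Theory.
Local Open Scope ring_scope.

Section Graph.
Variables (X : Type) (adj : X -> X -> Prop).

Definition walk_len (x y : X) (n : nat) : Prop :=
  exists p : nat -> X, p 0%N = x /\ p n = y /\
    (forall i, (i < n)%N -> adj (p i) (p i.+1)).

Definition dist (x y : X) : nat :=
  epsilon (inhabits 0%N)
    (fun n => walk_len x y n /\ forall m, walk_len x y m -> (n <= m)%N).

Definition is_regular_tree (q : nat) : Prop :=
  (forall x y, adj x y -> adj y x) /\
  (forall x, ~ adj x x) /\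
  (forall x y, exists n, walk_len x y n) /\
  (forall (n : nat) (p : nat -> X), (3 <= n)%N -> p 0%N = p n ->
      (forall i, (i < n)%N -> adj (p i) (p i.+1)) ->
      ~ (forall i j, (i < j)%N -> (j < n)%N -> p i <> p j)) /\
  (forall x, exists e : 'I_q.+1 -> X,
      injective e /\ forall y, adj x y <-> exists i, e i = y).

Definition is_ray (w : nat -> X) : Prop :=
  forall n, adj (w n) (w n.+1) /\ w n.+2 <> w n.

(* equality up to shift (eventual equality): the relation defining boundary
   points; a boundary point is represented by any ray in its class *)
Definition ray_equiv (w w' : nat -> X) : Prop :=
  exists k m : nat, forall n, w (n + k)%N = w' (n + m)%N.

Definition is_line (l : int -> X) : Prop :=
  forall n : int, adj (l n) (l (n + 1)) /\ l (n + 2) <> l n.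

Definition ray_from (x : X) (omega : nat -> X) (w : nat -> X) : Prop :=
  is_ray w /\ w 0%N = x /\ ray_equiv w omega.

Definition is_horo (o x : X) (omega : nat -> X) (b : int) : Prop :=
  exists (y : X) (wo wx wy : nat -> X),
    ray_from o omega wo /\ ray_from x omega wx /\ ray_from y omega wy /\
    (forall z, ((exists n, wo n = z) /\ (exists n, wx n = z))
               <-> exists n, wy n = z) /\
    b = (dist o y)%:Z - (dist x y)%:Z.

Definition horo (o x : X) (omega : nat -> X) : int :=
  epsilon (inhabits 0) (is_horo o x omega).

Record aut := Aut {
  afun : X -> X;
  ainv : X -> X;
  afunK : cancel afun ainv;
  ainvK : cancel ainv afun;
  afun_adj : forall x y, adj (afun x) (afun y) <-> adj x y }.

Lemma ainv_adj (g : aut) x y : adj (ainv g x) (ainv g y) <-> adj x y.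
Proof. by rewrite -(afun_adj g) !ainvK. Qed.

Definition aut_id : aut :=
  @Aut id id (fun _ => erefl) (fun _ => erefl) (fun _ _ => iff_refl _).

Definition aut_mul (g h : aut) : aut.
Proof.
refine (@Aut (afun g \o afun h) (ainv h \o ainv g) _ _ _).
- by move=> x /=; rewrite afunK afunK.
- by move=> x /=; rewrite ainvK ainvK.
- by move=> x y /=; rewrite afun_adj afun_adj.
Defined.

Definition aut_inv (g : aut) : aut.
Proof.
refine (@Aut (ainv g) (afun g) (@ainvK g) (@afunK g) _).
exact: ainv_adj.
Defined.

Definition aut_pow (g : aut) (j : int) : aut :=
  match j with
  | Posz n => iter n (aut_mul g) aut_id
  | Negz n => iter n.+1 (aut_mul (aut_inv g)) aut_id
  end.

Definition aut_eq (g h : aut) : Prop := forall x, afun g x = afun h x.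

End Graph.

(* Data attached to the geodesic l = ]omega_-, omega_+[ with l 0 = o.         *)
Section Iwasawa.
Variables (X : Type) (adj : X -> X -> Prop) (l : int -> X) (tau : aut adj).

Definition base_o : X := l 0.
Definition omega_plus : nat -> X := fun n => l n%:Z.
Definition omega_minus : nat -> X := fun n => l (- n%:Z).

Definition g_omega_plus (g : aut adj) : nat -> X := afun g \o omega_plus.
Definition g_omega_minus (g : aut adj) : nat -> X := afun g \o omega_minus.

Definition inK (k : aut adj) : Prop := afun k base_o = base_o.

Definition inB (n : aut adj) : Prop :=
  ray_equiv (afun n \o omega_plus) omega_plus /\ exists v, afun n v = v.

Definition inM (m : aut adj) : Prop := inK m /\ forall j, afun m (l j) = l j.

Definition Hiw (g : aut adj) : int :=
  epsilon (inhabits 0) (fun j => exists k n, inK k /\ inB n /\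
     aut_eq g (aut_mul k (aut_mul n (aut_pow tau j)))).

End Iwasawa.

Section Radon.
Variable R : realType.
Local Open Scope complex_scope.

(* q^z = exp(z ln q) for z : R[i] *)
Definition qpow (q : nat) (z : R[i]) : R[i] :=
  let L := ln (q%:R : R) in
  (expR (complex.Re z * L))%:C * ((cos (complex.Im z * L)) +i* (sin (complex.Im z * L))).

(* sum over Z of a (finitely supported) family: the eventual value of the
   symmetric partial sums \sum_{-n <= j <= n} F j *)
Definition zsum (F : int -> R[i]) : R[i] :=
  epsilon (inhabits 0) (fun c => exists N : nat, forall n : nat, (N <= n)%N ->
     \sum_(i < (n.*2).+1) F (i%:Z - n%:Z) = c).

Variables (X : Type) (adj : X -> X -> Prop) (q : nat) (l : int -> X)
          (tau r : aut adj).

Definition dweight (s s' : R[i]) (g : aut adj) : R[i] :=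
  qpow q ((2^-1 + 'i * s) * (Hiw l tau g)%:~R) *
  qpow q ((2^-1 + 'i * s') * (Hiw l tau (aut_mul g r))%:~R).

(* (R_{s,s'} f)(gM<tau>) = sum_j f(g tau^j M) d_{s,-conj s'}(g tau^j M);
   functions on G/M are right-M-invariant functions on G *)
Definition radon (s s' : R[i]) (f : aut adj -> R[i]) (g : aut adj) : R[i] :=
  zsum (fun j => f (aut_mul g (aut_pow tau j)) *
                 dweight s (- s'^*) (aut_mul g (aut_pow tau j))).

End Radon.

Definition right_M_invariant (R : realType) (X : Type) (adj : X -> X -> Prop)
  (l : int -> X) (f : aut adj -> R[i]) : Prop :=
  forall g m, inM l m -> f (aut_mul g m) = f g.

(* locally constant (for the topology of pointwise convergence on G,
   equivalently on the quotient G/M) *)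
Definition locally_constant (R : realType) (X : Type) (adj : X -> X -> Prop)
  (f : aut adj -> R[i]) : Prop :=
  forall g, exists F : list X, forall h,
    (forall v, List.In v F -> afun h v = afun g v) -> f h = f g.

(* compactly supported on G/M: the support lies over finitely many vertices
   g o (the sets {g : g o in S}, S finite, are the compact open subsets
   exhausting G, and M is compact) *)
Definition compact_support (R : realType) (X : Type) (adj : X -> X -> Prop)
  (o : X) (f : aut adj -> R[i]) : Prop :=
  exists S : list X, forall g, f g <> 0 -> List.In (afun g o) S.

From mathcomp Require Import all_boot all_order all_algebra fingroup perm zify ring.
From mathcomp Require Import all_classical all_reals all_analysis.
From mathcomp Require Import complex.
From Stdlib Require Import ClassicalEpsilon.
Set Implicit Arguments. Unset Strict Implicit. Unset Printing Implicit Defensive.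

(* The horofunction <x, w> equals d(o, w N) - d(x, w N) for all large N along any ray w
   representing the boundary point, so it is invariant under automorphisms, depends only
   on the end of w, and satisfies the cocycle identity <x, w>_a = <b, w>_a + <x, w>_b.
   The Iwasawa projection is H(h) = <h o, h omega_+>: it is unique because elements of
   B_{omega_+} fix a vertex and therefore cannot shift a tail of omega_+, and it exists
   because (q+1)-regularity lets one build, neighbour by neighbour along the geodesics
   from o, an element of K carrying [o, omega_+) onto any other ray from o. Since r
   reverses the line, H(h r) = <h o, h omega_->. The cocycle identity then factors the
   weight of g tau^j as the weight of gamma^-1 g tau^j times
   q^{(1/2+is)<gamma o, g omega_+>} q^{(1/2-i conj s')<gamma o, g omega_->}, where tau^j
   disappears since it fixes both ends of the line; f being compactly supported, the
   Radon sum is finite and this common factor comes out. *)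

Lemma ex_least_nat (P : nat -> Prop) :
  (exists n, P n) -> exists n, P n /\ forall m, P m -> n <= m.
Proof.
move=> [n Pn]; have /ex_minnP[m /asboolP Pm minm] : exists n, `[< P n >].
  by exists n; apply/asboolP.
by exists m; split=> // k /asboolP; apply: minm.
Qed.

Lemma perm_map2 m (i1 i2 j1 j2 : 'I_m) : (i1 == i2) = (j1 == j2) ->
  exists p : {perm 'I_m}, p i1 = j1 /\ p i2 = j2.
Proof.
have [<- /esym/eqP <- | ne12 /esym/negbT ne12'] := eqVneq i1 i2.
  by exists (tperm i1 j1); rewrite tpermL.
pose c := tperm i1 j1 i2.
have cj1 : c != j1.
  by rewrite /c -{2}(tpermL i1 j1); apply: contra ne12 => /eqP/perm_inj ->.
exists (tperm i1 j1 * tperm c j2)%g; rewrite !permM tpermL tpermL; split=> //.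
by rewrite tpermD // eq_sym.
Qed.

Section Tree.
Variables (X : Type) (adj : X -> X -> Prop) (q : nat).
Hypothesis Htree : is_regular_tree adj q.

Lemma adj_sym x y : adj x y -> adj y x.
Proof. by case: Htree => H _; apply: H. Qed.

Definition nbwalk (p : nat -> X) n :=
  (forall i, i < n -> adj (p i) (p i.+1)) /\ (forall i, i.+2 <= n -> p i.+2 <> p i).

Lemma nbwalk_le p n m : nbwalk p n -> m <= n -> nbwalk p m.
Proof. by move=> [Hw Hb] mn; split=> i hi; [apply: Hw | apply: Hb]; lia. Qed.

Lemma nbwalk_aut (g : aut adj) p n : nbwalk p n -> nbwalk (afun g \o p) n.
Proof.
move=> [Hw Hb]; split=> i hi /=; first by apply/afun_adj; apply: Hw.
by move/(can_inj (@afunK _ _ g)); apply: Hb.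
Qed.

Lemma nbwalk_extend p n z : nbwalk p n -> adj (p n) z -> (0 < n -> z <> p n.-1) ->
  nbwalk (fun i => if i <= n then p i else z) n.+1.
Proof.
move=> [Hw Hb] pz zpar; split=> i hi.
- by case: (ltngtP i n) => h; [apply: Hw | lia | rewrite h].
- have -> : i <= n by lia.
  have [h|h] : i.+2 <= n \/ i.+1 = n by lia.
    by rewrite h; apply: Hb.
  by rewrite ifN; [move: zpar; rewrite -h => /(_ isT) | lia].
Qed.

Lemma ray_nbwalk w n : is_ray adj w -> nbwalk w n.
Proof. by move=> Hw; split=> i _; [exact: (Hw i).1 | exact: (Hw i).2]. Qed.

Lemma nbwalk_inj p n i j : nbwalk p n -> i <= n -> j <= n -> p i = p j -> i = j.
Proof.
case: Htree => _ [Hirr [_ [Hcyc _]]] [Hw Hnb].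
suff no_return d k : 0 < d -> k + d <= n -> p k <> p (k + d).
  move=> hi hj e; case: (ltngtP i j) => // h; exfalso.
  - have := no_return (j - i) i; rewrite subnKC; last exact: ltnW.
    by move=> H; apply: (H _ hj e); lia.
  - have := no_return (i - j) j; rewrite subnKC; last exact: ltnW.
    by move=> H; apply: (H _ hi (esym e)); lia.
elim/ltn_ind: d k => d IH k d0 hkd e.
have [d1|[d2|d3]] : d = 1 \/ d = 2 \/ 3 <= d by lia.
- by subst d; apply: (Hirr (p k)); rewrite {2}e addn1; apply: Hw; lia.
- by subst d; apply: (Hnb k); [lia | rewrite e addn2].
- (* a revisit at distance >= 3 with no earlier revisit is a cycle *)
  apply: (Hcyc d (fun m => p (k + m)) d3); first by rewrite addn0.
  + by move=> m hm /=; rewrite addnS; apply: Hw; lia.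
  + move=> a b hab hb eab; apply: (IH (b - a) _ (k + a)); [lia | lia | lia |].
    by rewrite eab; congr p; lia.
Qed.

Lemma nbwalk_cat_rev p p' n n' :
  nbwalk p n.+1 -> nbwalk p' n'.+1 -> p n.+1 = p' n'.+1 -> p n <> p' n' ->
  nbwalk (fun k => if k <= n.+1 then p k else p' (n.+1 + n'.+1 - k)) (n.+1 + n'.+1).
Proof.
move=> [Hw Hb] [Hw' Hb'] en ne; split=> i hi.
- have [h|[e|h]] : i.+1 <= n.+1 \/ i = n.+1 \/ n.+1 < i by lia.
  + by rewrite h (ltnW h); apply: Hw.
  + subst i; rewrite leqnn ltnn en (_ : n.+1 + n'.+1 - n.+2 = n'); last lia.
    by apply: adj_sym; apply: Hw'.
  + rewrite !ifN; try lia.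
    rewrite (_ : n.+1 + n'.+1 - i = (n.+1 + n'.+1 - i.+1).+1); last lia.
    by apply: adj_sym; apply: Hw'; lia.
- have [h|[e|[e|h]]] : i.+2 <= n.+1 \/ i = n \/ i = n.+1 \/ n.+1 < i by lia.
  + have -> : i <= n.+1 by lia.
    by rewrite h; apply: Hb.
  + subst i; rewrite ltnn leqW // (_ : n.+1 + n'.+1 - n.+2 = n'); last lia.
    by move=> e; apply: ne.
  + subst i; rewrite leqnn ifN; last lia.
    rewrite (_ : n.+1 + n'.+1 - n.+3 = n'.-1); last lia.
    have := Hb' n'.-1; rewrite (_ : n'.-1.+2 = n'.+1); last lia.
    by rewrite en => H e; apply: H; [lia | rewrite e].
  + rewrite !ifN; try lia.
    rewrite (_ : n.+1 + n'.+1 - i = (n.+1 + n'.+1 - i.+2).+2); last lia.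
    by move=> e; apply: (Hb' (n.+1 + n'.+1 - i.+2)); [lia | rewrite e].
Qed.

Lemma nbwalk_unique p p' n n' : nbwalk p n -> nbwalk p' n' ->
  p 0 = p' 0 -> p n = p' n' -> n = n' /\ forall i, i <= n -> p i = p' i.
Proof.
elim: n n' p p' => [|n IH] [|n'] p p' Hp Hp' e0 en.
- by split=> // i; rewrite leqn0 => /eqP ->.
- by have := nbwalk_inj Hp' (leq0n _) (leqnn _); rewrite -e0 -en => /(_ erefl).
- by have := nbwalk_inj Hp (leq0n _) (leqnn _); rewrite e0 en => /(_ erefl).
- have [elast|nelast] := classic (p n = p' n').
  + have [enn agree] := IH n' p p' (nbwalk_le Hp (leqnSn _)) (nbwalk_le Hp' (leqnSn _)) e0 elast.
    subst n'; split=> // i; rewrite leq_eqVlt => /orP[/eqP -> // | ]; exact: agree.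
  + (* otherwise p followed by p' backwards is a closed non-backtracking walk *)
    have := nbwalk_inj (nbwalk_cat_rev Hp Hp' en nelast) (leq0n _) (leqnn _).
    by rewrite /= ifN ?subnn ?e0; [move=> /(_ erefl) | lia].
Qed.

Lemma dist_spec x y : walk_len adj x y (dist adj x y) /\
  forall m, walk_len adj x y m -> dist adj x y <= m.
Proof.
have : exists n, walk_len adj x y n /\ forall m, walk_len adj x y m -> n <= m.
  by apply: ex_least_nat; case: Htree => _ [_ [Hc _]]; apply: Hc.
by move/(epsilon_spec (inhabits 0%N)).
Qed.

Lemma dist_le x y n : walk_len adj x y n -> dist adj x y <= n.
Proof. by have [_] := dist_spec x y; apply. Qed.

Lemma geodesic_exists x y :
  exists p, nbwalk p (dist adj x y) /\ p 0 = x /\ p (dist adj x y) = y.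
Proof.
have [[p [p0 [pd pw]]] _] := dist_spec x y.
move: pd pw; set d := dist adj x y => pd pw.
exists p; split=> //; split=> // i hi e.
(* a backtrack p i -> p i.+1 -> p i could be cut out of a shortest walk *)
pose p' k := if k <= i then p k else p k.+2.
suff : d <= d - 2 by lia.
apply: dist_le; exists p'; rewrite /p' /=; split=> //; split.
- rewrite (_ : (d - 2 <= i) = (d == i.+2)); last lia.
  case: eqP => [hd | hd] /=; rewrite -pd; last by congr p; lia.
  by rewrite hd e; congr p; lia.
- move=> k hk /=; case: (ltngtP k i) => h; try by apply: pw; lia.
  by rewrite h -e; apply: pw; lia.
Qed.

Lemma dist_nbwalk p n : nbwalk p n -> dist adj (p 0) (p n) = n.
Proof.
move=> Hp; have [p' [Hp' [p0 pn]]] := geodesic_exists (p 0) (p n).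
by have [] := nbwalk_unique Hp' Hp.
Qed.

Lemma dist_aut (g : aut adj) x y : dist adj (afun g x) (afun g y) = dist adj x y.
Proof.
have [p [Hp [p0 pn]]] := geodesic_exists x y.
by have := dist_nbwalk (nbwalk_aut g Hp); rewrite /= p0 pn.
Qed.

Lemma ray_shift w k : is_ray adj w -> is_ray adj (fun i => w (i + k)).
Proof. by move=> Hw n /=; rewrite !addSn; apply: Hw. Qed.

Lemma ray_aut (g : aut adj) w : is_ray adj w -> is_ray adj (afun g \o w).
Proof.
move=> Hw n; have [H1 H2] := Hw n; split=> /=; first by apply/afun_adj.
by move/(can_inj (@afunK _ _ g)).
Qed.

Lemma dist_ray w i : is_ray adj w -> dist adj (w 0) (w i) = i.
Proof. by move=> Hw; apply: dist_nbwalk (ray_nbwalk i Hw). Qed.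

Lemma ray_equiv_sym (w w' : nat -> X) : ray_equiv w w' -> ray_equiv w' w.
Proof. by move=> [k [m H]]; exists m, k => n; rewrite H. Qed.

Lemma ray_equiv_trans (w1 w2 w3 : nat -> X) :
  ray_equiv w1 w2 -> ray_equiv w2 w3 -> ray_equiv w1 w3.
Proof.
move=> [k1 [m1 H1]] [k2 [m2 H2]]; exists (k1 + k2), (m1 + m2) => n.
by rewrite (addnC k1) addnA H1 addnAC H2 -addnA.
Qed.

Lemma ray_equiv_shift (w : nat -> X) k : ray_equiv (fun i => w (i + k)) w.
Proof. by exists 0, k => n; rewrite addn0. Qed.

Lemma ray_unique w w' : is_ray adj w -> is_ray adj w' -> w 0 = w' 0 ->
  ray_equiv w w' -> forall i, w i = w' i.
Proof.
move=> Hw Hw' e0 [k [m Hkm]].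
have [ekm agree] := nbwalk_unique (ray_nbwalk k Hw) (ray_nbwalk m Hw') e0 (Hkm 0).
subst m => i; case: (leqP i k) => h; first exact: agree.
by have := Hkm (i - k); rewrite subnK // ltnW.
Qed.

Lemma ray_glue p d w N : nbwalk p d -> is_ray adj w -> p d = w N ->
  (0 < d -> p d.-1 <> w N.+1) ->
  is_ray adj (fun i => if i <= d then p i else w (N + i - d)).
Proof.
move=> [Hpw Hpb] Hw pd junction i; split.
- have [h|[h|e]] : i < d \/ d < i \/ i = d by lia.
  + by rewrite (ltnW h) h; apply: Hpw.
  + rewrite !ifN; try lia.
    by rewrite (_ : N + i.+1 - d = (N + i - d).+1); [apply: (Hw _).1 | lia].
  + subst i; rewrite leqnn ifN ?pd; last lia.
    by rewrite (_ : N + d.+1 - d = N.+1); [apply: (Hw _).1 | lia].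
- have [h|[e|h]] : i.+2 <= d \/ i.+1 = d \/ d <= i by lia.
  + have -> : i <= d by lia.
    by rewrite h; apply: Hpb.
  + have -> : i <= d by lia.
    have -> : (i.+2 <= d) = false by lia.
    rewrite (_ : N + i.+2 - d = N.+1); last lia.
    by move=> e'; apply: junction; [lia | rewrite -e /= e'].
  + have -> : (i.+2 <= d) = false by lia.
    have [->|hne] := eqVneq i d.
      by rewrite leqnn pd (_ : N + d.+2 - d = N.+2); [apply: (Hw _).2 | lia].
    have -> : (i <= d) = false by lia.
    by rewrite (_ : N + i.+2 - d = (N + i - d).+2); [apply: (Hw _).2 | lia].
Qed.

Lemma ray_from_exists w x : is_ray adj w -> exists w', ray_from adj x w w'.
Proof.
move=> Hw.
have [_ [[N <-] Nmin]] :=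
  ex_least_nat (ex_intro (fun v => exists N, dist adj x (w N) = v) _ (ex_intro _ 0 erefl)).
have [p [Hp [p0 pd]]] := geodesic_exists x (w N).
set d := dist adj x (w N) in Hp pd Nmin.
(* [x, w N] followed by w would backtrack only if w N.+1 were closer to x *)
have junction : 0 < d -> p d.-1 <> w N.+1.
  move=> d0 e; have : d <= dist adj x (w N.+1) by apply: Nmin; exists N.+1.
  suff : dist adj x (w N.+1) <= d.-1 by lia.
  by apply: dist_le; exists p; split=> //; split=> // j hj; apply: Hp.1; lia.
exists (fun i => if i <= d then p i else w (N + i - d)); split; last split.
- exact: ray_glue.
- by rewrite /= p0.
- exists d, N => n; case: (posnP n) => [-> | n0]; first by rewrite leqnn pd.
  by rewrite ifN; [congr w | ]; lia.
Qed.

Lemma is_horo_eventually (w : nat -> X) a x b : is_ray adj w -> is_horo adj a x w b ->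
  exists N0, forall N, N0 <= N -> b = ((dist adj a (w N))%:Z - (dist adj x (w N))%:Z)%R.
Proof.
move=> Hw [y [wa [wx [wy [[Hwa [wa0 ewa]] [[Hwx [wx0 ewx]] [[Hwy [wy0 ewy]] [Hmeet ->]]]]]]]].
have [[t wat] [t' wxt]] : (exists t, wa t = y) /\ (exists t', wx t' = y).
  by apply/Hmeet; exists 0.
have Ea i : wa (i + t) = wy i.
  apply: (ray_unique (ray_shift t Hwa) Hwy); first by rewrite add0n wat.
  apply: ray_equiv_trans (ray_equiv_shift _ _) _.
  by apply: ray_equiv_trans ewa _; apply: ray_equiv_sym.
have Ex i : wx (i + t') = wy i.
  apply: (ray_unique (ray_shift t' Hwx) Hwy); first by rewrite add0n wxt.
  apply: ray_equiv_trans (ray_equiv_shift _ _) _.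
  by apply: ray_equiv_trans ewx _; apply: ray_equiv_sym.
have [k [m Hkm]] := ewy.
exists m => N hN; set i := N - m + k.
have -> : w N = wy i by rewrite Hkm subnK.
have da : dist adj a (wy i) = i + t by rewrite -Ea -wa0 dist_ray.
have dx : dist adj x (wy i) = i + t' by rewrite -Ex -wx0 dist_ray.
have ya : dist adj a y = t by rewrite -wat -wa0 dist_ray.
have yx : dist adj x y = t' by rewrite -wxt -wx0 dist_ray.
by rewrite da dx ya yx; lia.
Qed.

Lemma is_horo_exists (w : nat -> X) a x : is_ray adj w -> exists b, is_horo adj a x w b.
Proof.
move=> Hw.
have [wa [Hwa [wa0 ewa]]] := ray_from_exists a Hw.
have [wx [Hwx [wx0 ewx]]] := ray_from_exists x Hw.
have [k [m Hkm]] : ray_equiv wa wx by apply: ray_equiv_trans ewa _; apply: ray_equiv_sym.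
(* the two rays first meet at wa t = wx t' and agree from there on *)
have [t [[t' Htt'] tmin]] :=
  ex_least_nat (ex_intro (fun t => exists t', wa t = wx t') k (ex_intro _ m (Hkm 0))).
have Eq i : wx (i + t') = wa (i + t).
  apply: (ray_unique (ray_shift t' Hwx) (ray_shift t Hwa)); first by rewrite !add0n.
  apply: ray_equiv_trans (ray_equiv_shift _ _) _; apply: ray_equiv_trans ewx _.
  by apply: ray_equiv_sym; apply: ray_equiv_trans (ray_equiv_shift _ _) ewa.
exists ((dist adj a (wa t))%:Z - (dist adj x (wa t))%:Z)%R.
have Hwt : ray_from adj (wa t) w (fun i => wa (i + t)).
  split; first exact: ray_shift.
  by split; [rewrite add0n | apply: ray_equiv_trans (ray_equiv_shift _ _) ewa].
exists (wa t), wa, wx, (fun i => wa (i + t)); do 2 (split; first by split).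
split=> //; split=> // z; split=> [[[s <-] [s' ws']] | [n <-]].
- by exists (s - t); rewrite subnK //; apply: tmin; exists s'.
- by split; [exists (n + t) | exists (n + t'); rewrite Eq].
Qed.

Lemma horo_eventually (w : nat -> X) a x : is_ray adj w -> exists N0, forall N, N0 <= N ->
  horo adj a x w = ((dist adj a (w N))%:Z - (dist adj x (w N))%:Z)%R.
Proof.
move=> Hw; apply: is_horo_eventually => //.
exact: epsilon_spec (inhabits 0%R) _ (is_horo_exists a x Hw).
Qed.

Lemma horo_ray_equiv (w w' : nat -> X) a x : is_ray adj w -> is_ray adj w' ->
  ray_equiv w w' -> horo adj a x w = horo adj a x w'.
Proof.
move=> Hw Hw' [k [m Hkm]].
have [N0 H0] := horo_eventually a x Hw; have [N1 H1] := horo_eventually a x Hw'.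
by rewrite (H0 (N0 + N1 + k)) ?(H1 (N0 + N1 + m)) ?Hkm //; lia.
Qed.

Lemma horo_aut (g : aut adj) (w : nat -> X) a x : is_ray adj w ->
  horo adj (afun g a) (afun g x) (afun g \o w) = horo adj a x w.
Proof.
move=> Hw.
have [N0 H0] := horo_eventually a x Hw.
have [N1 H1] := horo_eventually (afun g a) (afun g x) (ray_aut g Hw).
by rewrite (H0 (N0 + N1)) ?(H1 (N0 + N1)) /= ?dist_aut //; lia.
Qed.

Lemma horo_cocycle (w : nat -> X) a b x : is_ray adj w ->
  horo adj a x w = (horo adj a b w + horo adj b x w)%R.
Proof.
move=> Hw.
have [N0 H0] := horo_eventually a x Hw; have [N1 H1] := horo_eventually a b Hw.
have [N2 H2] := horo_eventually b x Hw.
rewrite (H0 (N0 + N1 + N2)) ?(H1 (N0 + N1 + N2)) ?(H2 (N0 + N1 + N2)); lia.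
Qed.

Definition nbrs x : 'I_q.+1 -> X :=
  epsilon (inhabits (fun _ => x))
    (fun e => injective e /\ forall y, adj x y <-> exists i, e i = y).

Lemma nbrs_spec x : injective (nbrs x) /\ forall y, adj x y <-> exists i, nbrs x i = y.
Proof.
case: Htree => _ [_ [_ [_ H]]].
exact: epsilon_spec (inhabits (fun _ => x)) _ (H x).
Qed.

Definition nbr_bij x y (s : X -> X) :=
  [/\ forall z, adj x z -> adj y (s z),
      forall z z', adj x z -> adj x z' -> s z = s z' -> z = z' &
      forall u, adj y u -> exists z, adj x z /\ s z = u].

Lemma nbr_bij_exists x y a1 a2 b1 b2 : adj x a1 -> adj x a2 -> adj y b1 -> adj y b2 ->
  (a1 = a2 <-> b1 = b2) -> exists s, [/\ nbr_bij x y s, s a1 = b1 & s a2 = b2].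
Proof.
move=> xa1 xa2 yb1 yb2 e12.
have [ix Hx] := nbrs_spec x; have [iy Hy] := nbrs_spec y.
have [[i1 ei1] [i2 ei2]] : (exists i, nbrs x i = a1) /\ exists i, nbrs x i = a2.
  by split; apply/Hx.
have [[j1 ej1] [j2 ej2]] : (exists j, nbrs y j = b1) /\ exists j, nbrs y j = b2.
  by split; apply/Hy.
have [|p [p1 p2]] := @perm_map2 _ i1 i2 j1 j2.
  apply/eqP/eqP => e.
  - by apply: iy; rewrite ej1 ej2; apply: (proj1 e12); rewrite -ei1 -ei2 e.
  - by apply: ix; rewrite ei1 ei2; apply: (proj2 e12); rewrite -ej1 -ej2 e.
pose idx z := epsilon (inhabits ord0) (fun i => nbrs x i = z).
have idxK i : idx (nbrs x i) = i.
  by apply: ix; apply: (epsilon_spec (inhabits ord0) (fun j => nbrs x j = nbrs x i)); exists i.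
exists (fun z => nbrs y (p (idx z))).
split; [split | by rewrite -ei1 idxK p1 | by rewrite -ei2 idxK p2].
- by move=> z _; apply/Hy; eexists.
- by move=> _ _ /Hx[i <-] /Hx[j <-]; rewrite !idxK => /iy/perm_inj ->.
- move=> u /Hy[j <-]; exists (nbrs x ((p^-1)%g j)); split; first by apply/Hx; eexists.
  by rewrite idxK permKV.
Qed.

Lemma nbr_bij_exists1 x y a b : adj x a -> adj y b -> exists s, nbr_bij x y s /\ s a = b.
Proof.
move=> xa yb; have [s [? ? _]] := nbr_bij_exists xa xa yb yb (conj (fun _ => erefl) (fun _ => erefl)).
by exists s.
Qed.

Section RayAutomorphism.
Variables (o : X) (w1 w2 : nat -> X).
Hypotheses (Hw1 : is_ray adj w1) (Hw2 : is_ray adj w2) (w1o : w1 0 = o) (w2o : w2 0 = o).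

Local Notation depth x := (dist adj o x).

Definition geod x : nat -> X :=
  epsilon (inhabits (fun _ => o))
    (fun p => nbwalk p (depth x) /\ p 0 = o /\ p (depth x) = x).

Lemma geod_spec x : nbwalk (geod x) (depth x) /\ geod x 0 = o /\ geod x (depth x) = x.
Proof. exact: epsilon_spec (inhabits (fun _ => o)) _ (geodesic_exists o x). Qed.

Lemma geod_of_nbwalk p n : nbwalk p n -> p 0 = o ->
  depth (p n) = n /\ forall i, i <= n -> geod (p n) i = p i.
Proof.
move=> Hp p0; have dn : depth (p n) = n by rewrite -{1}p0 dist_nbwalk.
split=> //; have [Hg [g0 gn]] := geod_spec (p n); rewrite dn in Hg gn.
by have [_] := nbwalk_unique Hg Hp (etrans g0 (esym p0)) gn.
Qed.

Lemma geod_prefix x i : i <= depth x ->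
  depth (geod x i) = i /\ forall j, j <= i -> geod (geod x i) j = geod x j.
Proof. by move=> h; have [Hg [g0 _]] := geod_spec x; apply: geod_of_nbwalk (nbwalk_le Hg h) g0. Qed.

Lemma depth0 x : depth x = 0 -> x = o.
Proof. by move=> h; have [_ [g0 gx]] := geod_spec x; rewrite -gx h. Qed.

Definition parent x := geod x (depth x).-1.

Lemma adj_parent x : 0 < depth x -> adj (parent x) x.
Proof.
move=> h; have [[Hw _] [_ gx]] := geod_spec x.
by rewrite /parent; have := Hw (depth x).-1; rewrite (ltn_predK h) gx; apply; lia.
Qed.

Lemma parent_nbwalk p n : nbwalk p n -> p 0 = o -> 0 < n -> parent (p n) = p n.-1.
Proof.
by move=> Hp p0 n0; have [dn agree] := geod_of_nbwalk Hp p0; rewrite /parent dn agree ?leq_pred.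
Qed.

Lemma depth_ray w i : is_ray adj w -> w 0 = o -> depth (w i) = i.
Proof. by move=> Hw <-; apply: dist_ray. Qed.

Lemma parent_ray w i : is_ray adj w -> w 0 = o -> 0 < i -> parent (w i) = w i.-1.
Proof. by move=> Hw; apply: parent_nbwalk (ray_nbwalk i Hw). Qed.

(* s is a candidate for the action on the neighbours of x of an automorphism sending
   x to y. *)
Definition guided x y s :=
  depth x = depth y ->
  [/\ nbr_bij x y s, 0 < depth x -> s (parent x) = parent y &
      forall i, x = w1 i -> y = w2 i -> s (w1 i.+1) = w2 i.+1].

Lemma guided_exists x y : exists s, guided x y s.
Proof.
have [dxy|] := classic (depth x = depth y); last by exists id.
have par_adj z : 0 < depth z -> adj z (parent z) by move=> h; apply/adj_sym/adj_parent.
have [[k [xk yk]] | noray] := classic (exists k, x = w1 k /\ y = w2 k).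
  have xa : adj x (w1 k.+1) by rewrite xk; apply: (Hw1 k).1.
  have yb : adj y (w2 k.+1) by rewrite yk; apply: (Hw2 k).1.
  have ray_ok s : s (w1 k.+1) = w2 k.+1 ->
      forall i, x = w1 i -> y = w2 i -> s (w1 i.+1) = w2 i.+1.
    move=> e i xi _; suff -> : i = k by [].
    by rewrite -(depth_ray i Hw1 w1o) -(depth_ray k Hw1 w1o) -xi xk.
  have [x0 | xpos] := posnP (depth x).
    have [s [bij e]] := nbr_bij_exists1 xa yb.
    by exists s => _; split; [| rewrite x0 | apply: ray_ok].
  have k0 : 0 < k by rewrite -(depth_ray k Hw1 w1o) -xk.
  have nb1 : parent x <> w1 k.+1.
    by rewrite xk parent_ray // => e; apply: (Hw1 k.-1).2; rewrite prednK // e.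
  have nb2 : parent y <> w2 k.+1.
    by rewrite yk parent_ray // => e; apply: (Hw2 k.-1).2; rewrite prednK // e.
  have ypos : 0 < depth y by rewrite -dxy.
  have [s [bij e1 e2]] := nbr_bij_exists (par_adj _ xpos) xa (par_adj _ ypos) yb
    (conj (fun e => False_ind _ (nb1 e)) (fun e => False_ind _ (nb2 e))).
  by exists s => _; split=> //; apply: ray_ok.
have [x0 | xpos] := posnP (depth x).
  (* only o has depth 0, and o = w1 0 = w2 0 *)
  by exfalso; apply: noray; exists 0; rewrite w1o w2o; split; apply: depth0; rewrite -?dxy.
have ypos : 0 < depth y by rewrite -dxy.
have [s [bij e]] := nbr_bij_exists1 (par_adj _ xpos) (par_adj _ ypos).
by exists s => _; split=> // i xi yi; exfalso; apply: noray; exists i.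
Qed.

Definition step x y : X -> X := epsilon (inhabits id) (guided x y).

Lemma step_guided x y : guided x y (step x y).
Proof. exact: epsilon_spec (inhabits id) _ (guided_exists x y). Qed.

(* phi sends the geodesic [o, x] to [o, phi x], each edge being transported by the step
   map at its lower end, so that phi preserves depths and parents. *)
Fixpoint trace x i : X :=
  if i is i'.+1 then step (geod x i') (trace x i') (geod x i'.+1) else o.

Definition phi x := trace x (depth x).

Lemma trace_nbwalk x i : i <= depth x -> nbwalk (trace x) i.
Proof.
elim: i => [|i IH] hi; first by split=> j.
have [Ht Hb] := IH (ltnW hi).
have [Hg [g0 _]] := geod_spec x.
have [dxi _] := geod_prefix (ltnW hi).
have [dyi _] := geod_of_nbwalk (IH (ltnW hi)) erefl.
have [[s_adj s_inj _] s_par _] := step_guided (etrans dxi (esym dyi)).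
have aj : adj (geod x i) (geod x i.+1) by apply: Hg.1.
split=> j hj.
- by case: (ltngtP j i) => h; [apply: Ht | lia | rewrite h; apply: s_adj].
- have [h|e] : j.+2 <= i \/ j.+1 = i by lia.
    exact: Hb.
  subst i.
  (* the new step cannot return to the parent, since the step map is injective *)
  have tpar : parent (trace x j.+1) = trace x j := parent_nbwalk (IH (ltnW hi)) erefl isT.
  have gpar : parent (geod x j.+1) = geod x j := parent_nbwalk (nbwalk_le Hg (ltnW hi)) g0 isT.
  have par_adj : adj (geod x j.+1) (parent (geod x j.+1)).
    by apply/adj_sym/adj_parent; rewrite dxi.
  rewrite -tpar -s_par ?dxi // => e.
  by apply: (Hg.2 j hi); rewrite -gpar; apply: (s_inj _ _ aj par_adj e).
Qed.

Lemma depth_phi x : depth (phi x) = depth x /\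
  forall j, j <= depth x -> geod (phi x) j = trace x j.
Proof. exact: geod_of_nbwalk (trace_nbwalk (leqnn _)) erefl. Qed.

Lemma trace_ext x z n : (forall i, i <= n -> geod x i = geod z i) ->
  forall i, i <= n -> trace x i = trace z i.
Proof. by move=> agree; elim=> [//|i IH] hi /=; rewrite IH ?agree // ltnW. Qed.

Lemma trace_inj x z n : n <= depth x -> n <= depth z ->
  (forall i, i <= n -> trace x i = trace z i) -> forall i, i <= n -> geod x i = geod z i.
Proof.
move=> hx hz agree; elim=> [|i IH] hi.
  by have [_ [-> _]] := geod_spec x; have [_ [-> _]] := geod_spec z.
have gi := IH (ltnW hi).
have [dxi _] := geod_prefix (leq_trans (ltnW hi) hx).
have [dyi _] := geod_of_nbwalk (trace_nbwalk (leq_trans (ltnW hi) hx)) erefl.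
have [[_ s_inj _] _ _] := step_guided (etrans dxi (esym dyi)).
have [[Hgx _] _] := geod_spec x; have [[Hgz _] _] := geod_spec z.
apply: s_inj; [apply: Hgx; lia | rewrite gi; apply: Hgz; lia |].
by have := agree i.+1 hi => /=; rewrite gi agree // ltnW.
Qed.

Lemma parent_child x z : depth x = (depth z).+1 ->
  (forall i, i <= depth z -> geod x i = geod z i) -> parent x = z.
Proof.
by move=> dx agree; have [_ [_ gz]] := geod_spec z; rewrite /parent dx /= agree.
Qed.

Lemma adj_child x z : depth z = (depth x).+1 ->
  (forall i, i <= depth x -> geod z i = geod x i) -> adj x z.
Proof.
move=> dz agree; rewrite -(parent_child dz agree); apply: adj_parent; lia.
Qed.

Lemma adj_depth_cases x z : adj x z ->
  (depth z = (depth x).+1 /\ forall i, i <= depth x -> geod z i = geod x i) \/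
  (depth x = (depth z).+1 /\ forall i, i <= depth z -> geod x i = geod z i).
Proof.
move=> xz; have [Hg [g0 gx]] := geod_spec x.
have [[x0 ->] | notpar] := classic (0 < depth x /\ z = parent x).
  right; have [dz agree] := geod_prefix (leq_pred (depth x)).
  by rewrite /parent dz; split=> [|i hi]; [lia | rewrite agree].
left; have Hp : nbwalk (fun i => if i <= depth x then geod x i else z) (depth x).+1.
  apply: nbwalk_extend Hg _ _; first by rewrite gx.
  by move=> x0 e; apply: notpar.
have [dz agree] := geod_of_nbwalk Hp g0; rewrite /= ltnn in dz agree.
by split=> // i hi; rewrite agree ?hi // ltnW.
Qed.

Lemma phi_child x z : depth z = (depth x).+1 ->
  (forall i, i <= depth x -> geod z i = geod x i) -> phi z = step x (phi x) z.
Proof.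
move=> dz agree; have [_ [_ gx]] := geod_spec x; have [_ [_ gz]] := geod_spec z.
by rewrite /phi dz /= agree // gx (trace_ext agree) // -dz gz.
Qed.

Lemma phi_adj x z : adj x z -> adj (phi x) (phi z).
Proof.
move=> xz; have [[dz agree] | [dx agree]] := adj_depth_cases xz.
  have [[s_adj _ _] _ _] := step_guided (esym (depth_phi x).1).
  by rewrite (phi_child dz agree); apply: s_adj.
have [[s_adj _ _] _ _] := step_guided (esym (depth_phi z).1).
by rewrite (phi_child dx agree); apply/adj_sym/s_adj/adj_sym.
Qed.

Lemma phi_child_rev x z : depth (phi z) = (depth (phi x)).+1 ->
  (forall i, i <= depth (phi x) -> geod (phi z) i = geod (phi x) i) ->
  depth z = (depth x).+1 /\ forall i, i <= depth x -> geod z i = geod x i.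
Proof.
have [dx tx] := depth_phi x; have [dz tz] := depth_phi z.
rewrite dx dz => dzx agree; split=> //.
by apply: trace_inj; rewrite ?dzx // => i hi; rewrite -tz -?tx ?agree //; lia.
Qed.

Lemma phi_adjE x z : adj (phi x) (phi z) <-> adj x z.
Proof.
split; last exact: phi_adj.
case/adj_depth_cases => [[dz agree] | [dx agree]].
  by have [] := phi_child_rev dz agree; apply: adj_child.
by apply: adj_sym; have [] := phi_child_rev dx agree; apply: adj_child.
Qed.

Lemma phi_inj x z : phi x = phi z -> x = z.
Proof.
move=> e; have [dx tx] := depth_phi x; have [dz tz] := depth_phi z.
have dxz : depth x = depth z by rewrite -dx -dz e.
have [_ [_ gx]] := geod_spec x; have [_ [_ gz]] := geod_spec z.
have agree i : i <= depth x -> trace x i = trace z i.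
  by move=> hi; rewrite -tx // e tz // -dxz.
by rewrite -gx -gz -dxz (trace_inj (leqnn _) (eq_leq dxz) agree) ?leqnn.
Qed.

Lemma phi_surj y : exists x, phi x = y.
Proof.
move: {2}(depth y) (erefl (depth y)) => n; elim: n y => [|n IH] y dy.
  exists o; rewrite (depth0 dy) /phi.
  by have := depth_ray 0 Hw1 w1o; rewrite w1o => ->.
have [[Hg _] [_ gy]] := geod_spec y.
have hn : n <= depth y by rewrite dy.
have [dp gp] := geod_prefix hn.
have [x ex] := IH _ dp.
have dx : depth x = depth (geod y n) by rewrite -(depth_phi x).1 ex dp.
have [[_ _ s_surj] s_par _] := step_guided dx.
have [z [xz ez]] : exists z, adj x z /\ step x (geod y n) z = y.
  by apply: s_surj; rewrite -{2}gy dy; apply: Hg; rewrite dy.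
have [[dz agree] | [dxz agree]] := adj_depth_cases xz.
  by exists z; rewrite (phi_child dz agree) ex.
(* otherwise z is the parent of x, which is sent to the parent of geod y n *)
exfalso; have n0 : 0 < n by rewrite -(etrans dx dp) dxz.
rewrite -ez -(parent_child dxz agree) s_par ?dx ?dp // in dy.
by move: dy; rewrite /parent dp gp ?leq_pred // (geod_prefix _).1; lia.
Qed.

Lemma phi_ray i : phi (w1 i) = w2 i.
Proof.
have [di gi] := geod_of_nbwalk (ray_nbwalk i Hw1) w1o.
suff trace_ray j : j <= i -> trace (w1 i) j = w2 j by rewrite /phi di trace_ray.
elim: j => [|j IH] hj /=; first by rewrite w2o.
rewrite IH ?gi ?(ltnW hj) //.
have [_ _ s_ray] := step_guided (etrans (depth_ray j Hw1 w1o) (esym (depth_ray j Hw2 w2o))).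
exact: s_ray.
Qed.

Lemma exists_aut_ray : exists k : aut adj, forall i, afun k (w1 i) = w2 i.
Proof.
pose phinv y := epsilon (inhabits y) (fun x => phi x = y).
have phinvK : cancel phinv phi.
  by move=> y; apply: (epsilon_spec (inhabits y) _ (phi_surj y)).
have phiK : cancel phi phinv by move=> x; apply: phi_inj; rewrite phinvK.
by exists (Aut phiK phinvK phi_adjE) => i /=; apply: phi_ray.
Qed.

End RayAutomorphism.
End Tree.

Lemma aut_ext (X : Type) (adj : X -> X -> Prop) (g h : aut adj) :
  (forall x, afun g x = afun h x) -> g = h.
Proof.
case: g => f fi fK fiK fa; case: h => f' fi' fK' fiK' fa' /= E.
have ef : f = f' by apply: funext.
subst f'.
have efi : fi = fi' by apply: funext => x; apply: (can_inj fK); rewrite fiK fiK'.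
subst fi'.
by rewrite (Prop_irrelevance fK fK') (Prop_irrelevance fiK fiK') (Prop_irrelevance fa fa').
Qed.

Import Order.TTheory GRing.Theory Num.Theory.
Local Open Scope ring_scope.

Lemma afun_iter (X : Type) (adj : X -> X -> Prop) (g : aut adj) n x :
  afun (iter n (aut_mul g) (aut_id adj)) x = iter n (afun g) x.
Proof. by elim: n => //= n ->. Qed.

Lemma aut_powNK (X : Type) (adj : X -> X -> Prop) (g : aut adj) j x :
  afun (aut_pow g (- j)) (afun (aut_pow g j) x) = x.
Proof.
have iterK n (f f' : X -> X) : cancel f f' -> cancel (iter n f) (iter n f').
  by move=> fK; elim: n => // n IH y; rewrite iterSr iterS fK IH.
case: j => [[|m]|m] //.
- by rewrite -NegzE /aut_pow !afun_iter (iterK m.+1 _ _ (@afunK _ _ g)).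
- by rewrite NegzE opprK /aut_pow !afun_iter (iterK m.+1 _ _ (@ainvK _ _ g)).
Qed.

Section Iwasawa.
Variables (X : Type) (adj : X -> X -> Prop) (q : nat).
Hypothesis Htree : is_regular_tree adj q.
Variable l : int -> X.
Hypothesis Hl : is_line adj l.
Variable tau : aut adj.
Hypothesis Htau : forall n : int, afun tau (l n) = l (n + 1).

Local Notation o := (base_o l).

Lemma line_nbwalk (a : int) n : nbwalk adj (fun i => l (a + i%:Z)) n.
Proof.
split=> i _.
- by rewrite (_ : a + i.+1%:Z = a + i%:Z + 1); [apply: (Hl _).1 | lia].
- by rewrite (_ : a + i.+2%:Z = a + i%:Z + 2); [apply: (Hl _).2 | lia].
Qed.

Lemma line_inj : injective l.
Proof.
move=> a b; wlog ab : a b / a <= b.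
  by move=> H e; case: (lerP a b) => h; [apply: H | apply/esym/(H b a (ltW h))].
move=> e; have := nbwalk_inj Htree (line_nbwalk a `|b - a|%N) (leq0n _) (leqnn _).
by rewrite addr0 (_ : a + `|b - a|%N%:Z = b) ?e; [move/(_ erefl); lia | lia].
Qed.

Lemma dist_o_line (M : int) : 0 <= M -> (dist adj o (l M))%:Z = M.
Proof.
move=> M0; have := dist_nbwalk Htree (line_nbwalk 0 `|M|%N).
by rewrite /= !add0r (_ : `|M|%N%:Z = M) /base_o => [-> |]; lia.
Qed.

Lemma ray_omega_plus : is_ray adj (omega_plus l).
Proof.
move=> n; rewrite /omega_plus.
have -> : n.+1%:Z = n%:Z + 1 by lia.
have -> : n.+2%:Z = n%:Z + 2 by lia.
exact: Hl.
Qed.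

Lemma ray_omega_minus : is_ray adj (omega_minus l).
Proof.
move=> n; rewrite /omega_minus; split.
- rewrite (_ : - n%:Z = - n.+1%:Z + 1); last lia.
  by apply: (adj_sym Htree); apply: (Hl _).1.
- rewrite (_ : - n%:Z = - n.+2%:Z + 2); last lia.
  by move=> e; apply: (Hl (- n.+2%:Z)).2; rewrite e.
Qed.

Lemma tau_pow_line j n : afun (aut_pow tau j) (l n) = l (n + j).
Proof.
have ainv_tau m : ainv tau (l m) = l (m - 1) by rewrite -{1}(subrK 1 m) -Htau afunK.
case: j => m /=; rewrite afun_iter; elim: m => [|m IH] /=.
- by rewrite addr0.
- by rewrite IH Htau; congr l; lia.
- by rewrite ainv_tau NegzE; congr l; lia.
- by rewrite IH ainv_tau !NegzE; congr l; lia.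
Qed.

Definition busemann (h : aut adj) (w : nat -> X) := horo adj o (afun h o) (afun h \o w).

Lemma busemann_plus_eventually h : exists M0 : int, forall M : int, M0 <= M ->
  (dist adj o (afun h (l M)))%:Z = M + busemann h (omega_plus l).
Proof.
have [N0 H0] := horo_eventually Htree o (afun h o) (ray_aut h ray_omega_plus).
exists N0%:Z => M hM; rewrite /busemann (H0 `|M|%N); last lia.
rewrite /= /omega_plus (_ : `|M|%N%:Z = M); last lia.
by rewrite (dist_aut Htree) dist_o_line; lia.
Qed.

Definition iwasawa_decomp h j := exists k n, inK l k /\ inB l n /\
  aut_eq h (aut_mul k (aut_mul n (aut_pow tau j))).

Lemma inB_fixes_tail (n : aut adj) : inB l n ->
  exists a : nat, forall M : int, a%:Z <= M -> afun n (l M) = l M.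
Proof.
move=> [[a [b Hab]] [v Hv]].
have {}Hab i : afun n (l (i + a)%N%:Z) = l (i + b)%N%:Z := Hab i.
(* n fixes v and d(o, l M) - d(v, l M) is eventually constant, so n cannot shift omega_plus *)
have ab : a = b.
  have [N1 H1] := horo_eventually Htree o v ray_omega_plus.
  pose i := (N1 + a + b)%N.
  have e1 := H1 (i + a)%N ltac:(lia); have e2 := H1 (i + b)%N ltac:(lia).
  have e3 : dist adj v (l (i + b)%N%:Z) = dist adj v (l (i + a)%N%:Z).
    by rewrite -(Hab i) -{1}Hv (dist_aut Htree).
  have e4 := @dist_o_line (i + a)%N%:Z ltac:(lia).
  have e5 := @dist_o_line (i + b)%N%:Z ltac:(lia).
  rewrite /omega_plus in e1 e2; lia.
subst b; exists a => M hM.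
by have := Hab `|M - a%:Z|%N; rewrite (_ : (`|M - a%:Z| + a)%N%:Z = M) //; lia.
Qed.

Lemma iwasawa_decomp_unique h j : iwasawa_decomp h j -> j = busemann h (omega_plus l).
Proof.
move=> [k [n [Hk [Hn Heq]]]]; have [a fix_a] := inB_fixes_tail Hn.
have [M0 HM0] := busemann_plus_eventually h.
pose M := `|M0|%N%:Z + a%:Z + `|j|%N%:Z.
have := HM0 M ltac:(lia); rewrite Heq /= tau_pow_line fix_a; last lia.
by rewrite -{1}Hk (dist_aut Htree) dist_o_line; lia.
Qed.

Lemma ray_from_o_tail (g : aut adj) (M0 : int) :
  (forall M : int, M0 <= M -> (dist adj o (afun g (l M)))%:Z = M) ->
  exists rho a, [/\ is_ray adj rho, rho 0%N = o & forall N, (a <= N)%N -> rho N = afun g (l N%:Z)].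
Proof.
move=> dg; have [rho [Hrho [rho0 [a [b Hab]]]]] := ray_from_exists Htree o (ray_aut g ray_omega_plus).
(* rho and g omega_plus are both at distance N from o at their N-th vertex *)
have ab : a = b.
  pose i := (`|M0|%N + a + b)%N.
  have := dist_ray Htree (i + a)%N Hrho; rewrite rho0 Hab /= /omega_plus.
  by move/(congr1 (fun n : nat => n%:Z)); rewrite dg; lia.
subst b; exists rho, a; split=> // N aN.
by have := Hab (N - a)%N; rewrite subnK.
Qed.

Lemma iwasawa_decomp_exists h : iwasawa_decomp h (busemann h (omega_plus l)).
Proof.
set j := busemann h (omega_plus l).
pose h' := aut_mul h (aut_pow tau (- j)).
have [M0 HM0] := busemann_plus_eventually h.
have [rho [a [Hrho rho0 rh]]] : exists rho a, [/\ is_ray adj rho, rho 0%N = o &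
    forall N, (a <= N)%N -> rho N = afun h' (l N%:Z)].
  by apply: (ray_from_o_tail (M0 := M0 + j)) => M hM; rewrite /= tau_pow_line HM0; lia.
have [k Hk] := exists_aut_ray Htree ray_omega_plus Hrho erefl rho0.
have kinv_h' N : (a <= N)%N -> ainv k (afun h' (l N%:Z)) = l N%:Z.
  by move=> aN; rewrite -rh // -(Hk N) afunK.
exists k, (aut_mul (aut_inv k) h'); split; last split.
- exact: etrans (Hk 0%N) rho0.
- split; first by exists a, a => i /=; rewrite kinv_h' // leq_addl.
  by exists (l a%:Z); rewrite /= kinv_h'.
- by move=> x /=; rewrite ainvK aut_powNK.
Qed.

Lemma Hiw_busemann h : Hiw l tau h = busemann h (omega_plus l).
Proof.
apply: iwasawa_decomp_unique.
exact: epsilon_spec (inhabits 0) (iwasawa_decomp h) (ex_intro _ _ (iwasawa_decomp_exists h)).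
Qed.

Lemma busemann_cocycle (gam h : aut adj) (w : nat -> X) : is_ray adj w ->
  busemann h w = busemann (aut_mul (aut_inv gam) h) w + horo adj o (afun gam o) (afun h \o w).
Proof.
move=> Hw; have Hhw := ray_aut h Hw.
rewrite /busemann (horo_cocycle Htree o (afun gam o) (afun h o) Hhw) addrC; congr (_ + _).
rewrite -(horo_aut Htree gam _ _ (ray_aut (aut_inv gam) Hhw)) /= ainvK.
by congr horo; apply: funext => n /=; rewrite ainvK.
Qed.

Lemma horo_translate (g : aut adj) (w : nat -> X) j x :
  w = omega_plus l \/ w = omega_minus l ->
  horo adj o x (afun (aut_mul g (aut_pow tau j)) \o w) = horo adj o x (afun g \o w).
Proof.
move=> ew; have Hw : is_ray adj w.
  by case: ew => ->; [apply: ray_omega_plus | apply: ray_omega_minus].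
apply: (horo_ray_equiv Htree); try exact: ray_aut.
have [hj|hj] := lerP 0 j; case: ew => ->.
- by exists 0%N, `|j|%N => n /=; rewrite tau_pow_line /omega_plus; congr (afun g (l _)); lia.
- by exists `|j|%N, 0%N => n /=; rewrite tau_pow_line /omega_minus; congr (afun g (l _)); lia.
- by exists `|j|%N, 0%N => n /=; rewrite tau_pow_line /omega_plus; congr (afun g (l _)); lia.
- by exists 0%N, `|j|%N => n /=; rewrite tau_pow_line /omega_minus; congr (afun g (l _)); lia.
Qed.

Variable r : aut adj.
Hypotheses (HrK : inK l r)
  (Hrtau : forall j : int,
     aut_eq (aut_mul r (aut_mul (aut_pow tau j) (aut_inv r))) (aut_pow tau (- j))).

Lemma r_line n : afun r (l n) = l (- n).
Proof.
have Hro : ainv r o = o by rewrite -{1}HrK afunK.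
by have := Hrtau n o; rewrite /= Hro /base_o !tau_pow_line !add0r.
Qed.

Lemma Hiw_mul_r h : Hiw l tau (aut_mul h r) = busemann h (omega_minus l).
Proof.
rewrite Hiw_busemann /busemann /= HrK.
by congr horo; apply: funext => n /=; rewrite /omega_plus /omega_minus r_line.
Qed.
End Iwasawa.

Lemma aut_mulA (X : Type) (adj : X -> X -> Prop) (a b c : aut adj) :
  aut_mul a (aut_mul b c) = aut_mul (aut_mul a b) c.
Proof. exact: aut_ext. Qed.

Section ZSum.
Variable R : realType.
Local Open Scope complex_scope.

Lemma qpowD (q : nat) (a b : R[i]) : qpow q (a + b) = qpow q a * qpow q b.
Proof.
case: a => a1 a2; case: b => b1 b2; rewrite /qpow /=.
set L := ln (q%:R : R).
rewrite !mulrDl expRD cosD sinD.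
by apply/eqP; rewrite eq_complex /=; apply/andP; split; apply/eqP; ring.
Qed.

Definition psum (F : int -> R[i]) (n : nat) := \sum_(i < (n.*2).+1) F (i%:Z - n%:Z).

Lemma psum_step F n : F (- n.+1%:Z) = 0 -> F n.+1%:Z = 0 -> psum F n.+1 = psum F n.
Proof.
move=> Fl Fr; rewrite /psum -!(big_mkord xpredT (fun i => F (i%:Z - _))) doubleS.
rewrite big_nat_recl // big_nat_recr //=.
rewrite (_ : 0%N%:Z - n.+1%:Z = - n.+1%:Z) ?Fl; last lia.
rewrite (_ : (n.*2).+2%:Z - n.+1%:Z = n.+1%:Z) ?Fr; last lia.
by rewrite add0r addr0; apply: eq_bigr => i _; congr F; lia.
Qed.

Lemma psum_stable F N0 : (forall j, F j != 0 -> (`|j| <= N0)%N) ->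
  forall n, (N0 <= n)%N -> psum F n = psum F N0.
Proof.
move=> Fsupp; elim=> [|n IH] hn; first by have -> : N0 = 0%N by lia.
have [->|ne] := eqVneq N0 n.+1; first by [].
rewrite psum_step ?IH //; try lia.
- by apply/eqP; apply: contraTT isT => /Fsupp; lia.
- by apply/eqP; apply: contraTT isT => /Fsupp; lia.
Qed.

Lemma zsum_finite (F : int -> R[i]) N0 : (forall j, F j != 0 -> (`|j| <= N0)%N) ->
  zsum F = psum F N0.
Proof.
move=> Fsupp.
have ex : exists c, exists N : nat, forall n : nat, (N <= n)%N ->
    \sum_(i < (n.*2).+1) F (i%:Z - n%:Z) = c.
  by exists (psum F N0), N0; apply: psum_stable.
have [N HN] := epsilon_spec (inhabits 0) _ ex.
by rewrite /zsum -(HN (N + N0)%N) ?leq_addr //; apply: (psum_stable Fsupp); lia.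
Qed.

Lemma zsum_distrr (F : int -> R[i]) (c : R[i]) N0 :
  (forall j, F j != 0 -> (`|j| <= N0)%N) -> zsum (fun j => c * F j) = c * zsum F.
Proof.
move=> Fsupp; rewrite (zsum_finite Fsupp) (@zsum_finite _ N0) ?/psum ?big_distrr //.
by move=> j cF; apply: Fsupp; apply: contra_neq cF => ->; rewrite mulr0.
Qed.
End ZSum.

Lemma line_preimage_bounded (X : Type) (adj : X -> X -> Prop) (q : nat)
  (Htree : is_regular_tree adj q) (l : int -> X) (Hl : is_line adj l) (h : aut adj)
  (S : list X) : exists N0 : nat, forall j : int, List.In (afun h (l j)) S -> (`|j| <= N0)%N.
Proof.
elim: S => [|v S [N IH]]; first by exists 0%N.
have [[j0 e0] | notimg] := classic (exists j0, afun h (l j0) = v).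
  exists (N + `|j0|)%N => j /= [e | hin]; last by have := IH j hin; lia.
  suff -> : j = j0 by lia.
  by apply: (line_inj Htree Hl); apply: (can_inj (@afunK _ _ h)); rewrite e0 e.
by exists N => j /= [e | hin]; [exfalso; apply: notimg; exists j | apply: IH].
Qed.

Section Weight.
Variables (R : realType) (X : Type) (adj : X -> X -> Prop) (q : nat).
Hypothesis Htree : is_regular_tree adj q.
Variable l : int -> X.
Hypothesis Hl : is_line adj l.
Variable tau : aut adj.
Hypothesis Htau : forall n : int, afun tau (l n) = l (n + 1).
Variable r : aut adj.
Hypotheses (HrK : inK l r)
  (Hrtau : forall j : int,
     aut_eq (aut_mul r (aut_mul (aut_pow tau j) (aut_inv r))) (aut_pow tau (- j))).

Local Notation o := (base_o l).
Local Open Scope complex_scope.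

Lemma dweight_translate (s s' : R[i]) (gam h : aut adj) :
  dweight q l tau r s s' h =
    qpow q ((2^-1 + 'i * s) * (horo adj o (afun gam o) (afun h \o omega_plus l))%:~R) *
    qpow q ((2^-1 + 'i * s') * (horo adj o (afun gam o) (afun h \o omega_minus l))%:~R) *
    dweight q l tau r s s' (aut_mul (aut_inv gam) h).
Proof.
rewrite /dweight !(Hiw_mul_r Htree Hl Htau HrK Hrtau) !(Hiw_busemann Htree Hl Htau).
rewrite (busemann_cocycle Htree l gam h (ray_omega_plus Hl)).
rewrite (busemann_cocycle Htree l gam h (ray_omega_minus Htree Hl)).
by rewrite !intrD !mulrDr !qpowD; ring.
Qed.
End Weight.

Local Open Scope complex_scope.

Theorem proposition3p6
  (R : realType) (X : Type) (adj : X -> X -> Prop) (q : nat)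
  (hq : (2 <= q)%N) (Htree : is_regular_tree adj q)
  (l : int -> X) (Hl : is_line adj l)
  (tau : aut adj) (Htau : forall n : int, afun tau (l n) = l (n + 1))
  (r : aut adj) (HrK : inK l r) (Hr2 : aut_eq (aut_mul r r) (aut_id adj))
  (Hrtau : forall j : int,
     aut_eq (aut_mul r (aut_mul (aut_pow tau j) (aut_inv r))) (aut_pow tau (- j)))
  (s s' : R[i]) (f : aut adj -> R[i])
  (HfM : right_M_invariant l f) (Hflc : locally_constant f)
  (Hfcs : compact_support (base_o l) f)
  (gamma g : aut adj) :
  radon q l tau r s s' (fun h => f (aut_mul (aut_inv gamma) h)) g =
    qpow q ((2^-1 + 'i * s) *
            (horo adj (base_o l) (afun gamma (base_o l)) (g_omega_plus l g))%:~R) *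
    qpow q ((2^-1 - 'i * s'^*) *
            (horo adj (base_o l) (afun gamma (base_o l)) (g_omega_minus l g))%:~R) *
    radon q l tau r s s' f (aut_mul (aut_inv gamma) g).
Proof.
(* the identity holds term by term *)
set h := aut_mul (aut_inv gamma) g.
have [S HS] := Hfcs; have [N0 HN0] := line_preimage_bounded Htree Hl h S.
rewrite /radon -(@zsum_distrr _ _ _ N0); last first.
  move=> j /eqP fj0; apply: HN0; rewrite -[j]add0r -(tau_pow_line Htau).
  by apply: (HS (aut_mul h (aut_pow tau j))) => f0; apply: fj0; rewrite f0 mul0r.
congr zsum; apply: funext => j.
rewrite (dweight_translate Htree Hl Htau HrK Hrtau _ _ gamma) aut_mulA.
rewrite (horo_translate Htree Hl Htau _ _ _ (or_introl erefl)).
by rewrite (horo_translate Htree Hl Htau _ _ _ (or_intror erefl)) mulrN mulrCA.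
Qed.
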